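(* Let $\Bbbk$ be an algebraically closed field with $\mathrm{char}(\Bbbk)\neq 2$, let $n\ge1$, and let $\mu=(\mu_{ij})$ with $\mu_{ij}\in\Bbbk^\times$, $\mu_{ij}\mu_{ji}=1$, $\mu_{ii}=1$. Let $\Phi:\mathbb P^{n-1}\times\mathbb P^{n-1}\to\mathbb P(M^\mu(n,\Bbbk))$ be given by $\Phi(a,b)=(a_ib_j+\mu_{ij}a_jb_i)_{i,j=1}^n$ for $a=(a_1,\dots,a_n)$, $b=(b_1,\dots,b_n)$. Then the image of $\Phi$ equals $\{M\in\mathbb P(M^\mu(n,\Bbbk)) : \mu\text{-rank}(M)\le 2\}$.
   Context: $S$ is the $\Bbbk$-algebra on generators $z_1,\dots,z_n$ with relations $z_jz_i=\mu_{ij}z_iz_j$ for all $i,j$. $M^\mu(n,\Bbbk)$ is the vector space of $\mu$-symmetric matrices, i.e. $M\in M(n,\Bbbk)$ with $M_{ij}=\mu_{ij}M_{ji}$ for all $i,j$. The map $\tau:\mathbb P(M^\mu(n,\Bbbk))\to\mathbb P(S_2)$ is $\tau(M)=z^TMz=\sum_{i,j}M_{ij}z_iz_j$ where $z=(z_1,\dots,z_n)^T$. For $Q\in S_2$: $\mu$-rank$(Q)=0$ if $Q=0$; $\mu$-rank$(Q)=1$ if $Q=L^2$ for some nonzero $L\in S_1$; $\mu$-rank$(Q)=2$ if $Q$ is not of the form $L^2$ with $L\in S_1\setminus\{0\}$ but $Q=L_1L_2$ with $L_1,L_2\in S_1\setminus\{0\}$. For $M\in\mathbb P(M^\mu(n,\Bbbk))$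 with $\mu$-rank$(\tau(M))\le2$, $\mu$-rank$(M)$ is defined as $\mu$-rank$(\tau(M))$; thus ''$\mu$-rank$(M)\le 2$'' means $\tau(M)=L_1L_2$ for some nonzero $L_1,L_2\in S_1$. *)

From HB Require Import structures.
From mathcomp Require Import all_boot all_order all_algebra.
Set Implicit Arguments. Unset Strict Implicit. Unset Printing Implicit Defensive.
Import Order.TTheory GRing.Theory.
Local Open Scope ring_scope.

(* Degree-2 part S_2 of S = k<z_1..z_n>/(z_j z_i - mu_ij z_i z_j), modelled
   via its PBW basis {z_i z_j : i <= j}: an element of S_2 is represented by
   its (upper-triangular) coefficient matrix in that basis. *)

(* Normal form of the formal expression sum_{i,j} c_ij z_i z_j in S_2:
   for i < j, z_j z_i = mu_ij z_i z_j, so the coefficient of z_i z_j is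
   c_ij + mu_ij c_ji. *)
Definition nf2 (K : fieldType) (n : nat) (mu c : 'M[K]_n) : 'M[K]_n :=
  \matrix_(i, j) (if (i < j)%N then c i j + mu i j * c j i
                  else if i == j then c i i else 0).

Definition mu_symmetric (K : fieldType) (n : nat) (mu M : 'M[K]_n) : Prop :=
  forall i j, M i j = mu i j * M j i.

(* tau(M) = z^T M z in S_2 *)
Definition tau (K : fieldType) (n : nat) (mu M : 'M[K]_n) : 'M[K]_n :=
  nf2 mu M.

(* product L1 L2 in S_2 of L1 = sum a_i z_i, L2 = sum b_j z_j in S_1 *)
Definition lin_prod (K : fieldType) (n : nat) (mu : 'M[K]_n) (a b : 'rV[K]_n)
  : 'M[K]_n := nf2 mu (\matrix_(i, j) (a 0 i * b 0 j)).

Definition mu_rank_le2 (K : fieldType) (n : nat) (mu M : 'M[K]_n) : Prop :=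
  exists L1 L2 : 'rV[K]_n, L1 != 0 /\ L2 != 0 /\ tau mu M = lin_prod mu L1 L2.

Definition Phi (K : fieldType) (n : nat) (mu : 'M[K]_n) (a b : 'rV[K]_n)
  : 'M[K]_n := \matrix_(i, j) (a 0 i * b 0 j + mu i j * a 0 j * b 0 i).

From HB Require Import structures.
From mathcomp Require Import all_boot all_order all_algebra.
Set Implicit Arguments. Unset Strict Implicit. Unset Printing Implicit Defensive.
Import GRing.Theory.
Local Open Scope ring_scope.

(* For a mu-symmetric matrix M, the normal form tau(M) has entry 2 M_ij above
   the diagonal and M_ii on it, so when char K <> 2, tau is injective on
   mu-symmetric matrices.  Phi(a, b) is mu-symmetric with
   tau(Phi(a, b)) = 2 L_a L_b; hence a mu-symmetric M with tau(M) = L_1 L_2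
   must be Phi(L_1, L_2) / 2. *)

Section MuSymmetric.

Variables (K : fieldType) (n : nat) (mu : 'M[K]_n).
Hypothesis mu_skew : forall i j, mu i j * mu j i = 1.
Hypothesis mu_diag : forall i, mu i i = 1.

Lemma nf2Z (k : K) (c : 'M[K]_n) : nf2 mu (k *: c) = k *: nf2 mu c.
Proof.
apply/matrixP => i j; rewrite !mxE.
by case: ifP => _; [rewrite mulrDr mulrCA | case: ifP => _; rewrite ?mxE ?mulr0].
Qed.

Lemma tauZ (k : K) (M : 'M[K]_n) : tau mu (k *: M) = k *: tau mu M.
Proof. exact: nf2Z. Qed.

Lemma lin_prodZl (k : K) (a b : 'rV[K]_n) :
  lin_prod mu (k *: a) b = k *: lin_prod mu a b.
Proof.
rewrite /lin_prod -nf2Z; congr nf2; apply/matrixP => i j.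
by rewrite !mxE mulrA.
Qed.

Lemma mu_symmetricZ (k : K) (M : 'M[K]_n) :
  mu_symmetric mu M -> mu_symmetric mu (k *: M).
Proof. by move=> Msym i j; rewrite !mxE Msym mulrCA. Qed.

Lemma Phi_mu_symmetric (a b : 'rV[K]_n) : mu_symmetric mu (Phi mu a b).
Proof.
move=> i j; rewrite !mxE mulrDr !mulrA mu_skew.
by rewrite mul1r addrC mulrAC [mu i j * _]mulrC.
Qed.

Lemma Phi_diag (a b : 'rV[K]_n) i : Phi mu a b i i = 2%:R * (a 0 i * b 0 i).
Proof. by rewrite mxE mu_diag mul1r mulr_natl mulr2n. Qed.

Lemma tau_mu_symmetricE (M : 'M[K]_n) i j : mu_symmetric mu M ->
  tau mu M i j = if (i < j)%N then 2%:R * M i j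
                 else if i == j then M i i else 0.
Proof.
move=> Msym; rewrite mxE; case: ifP => // _.
by rewrite (Msym j i) mulrA mu_skew mul1r mulr_natl mulr2n.
Qed.

Lemma tau_Phi (a b : 'rV[K]_n) : tau mu (Phi mu a b) = 2%:R *: lin_prod mu a b.
Proof.
apply/matrixP => i j; rewrite tau_mu_symmetricE; last exact: Phi_mu_symmetric.
rewrite Phi_diag !mxE.
by case: ifP => _; [rewrite mulrA | case: ifP => _; rewrite ?mulr0].
Qed.

Hypothesis two_neq0 : 2%:R != 0 :> K.

Lemma tau_mu_symmetric_inj (M N : 'M[K]_n) :
  mu_symmetric mu M -> mu_symmetric mu N -> tau mu M = tau mu N -> M = N.
Proof.
move=> Msym Nsym /matrixP tauMN.
have upper (i j : 'I_n) : (i <= j)%N -> M i j = N i j.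
  move: (tauMN i j); rewrite !tau_mu_symmetricE //.
  by have [_ /(mulfI two_neq0)|//|/val_inj <-] := ltngtP i j; rewrite ?eqxx.
apply/matrixP => i j; have [/upper //|/ltnW ji] := leqP i j.
by rewrite Msym Nsym upper.
Qed.

Lemma Phi_eq0 (a b : 'rV[K]_n) : (Phi mu a b == 0) = (a == 0) || (b == 0).
Proof.
apply/idP/idP; last first.
  case/orP => /eqP->; apply/eqP/matrixP => i j;
  by rewrite !mxE !(mul0r, mulr0, addr0).
apply: contraLR; rewrite negb_or => /andP[/rV0Pn[i ai] /rV0Pn[j bj]].
apply/matrix0Pn; have [aj0|aj] := eqVneq (a 0 j) 0.
  by exists i, j; rewrite mxE aj0 mulr0 mul0r addr0 mulf_neq0.
by exists j, j; rewrite Phi_diag !mulf_neq0.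
Qed.

End MuSymmetric.

Theorem proposition2p5 (K : closedFieldType) (n : nat) (mu : 'M[K]_n) :
  (2%:R : K) != 0 ->
  (0 < n)%N ->
  (forall i j, mu i j != 0) ->
  (forall i j, mu i j * mu j i = 1) ->
  (forall i, mu i i = 1) ->
  (* Phi is a well-defined map P^{n-1} x P^{n-1} -> P(M^mu(n,k)) whose image
     lies in the mu-rank <= 2 locus *)
  (forall a b : 'rV[K]_n, a != 0 -> b != 0 ->
     [/\ Phi mu a b != 0, mu_symmetric mu (Phi mu a b)
       & mu_rank_le2 mu (Phi mu a b)]) /\
  (* every point of P(M^mu(n,k)) of mu-rank <= 2 is in the image *)
  (forall M : 'M[K]_n, M != 0 -> mu_symmetric mu M -> mu_rank_le2 mu M ->
     exists (a b : 'rV[K]_n) (c : K),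
       [/\ a != 0, b != 0, c != 0 & M = c *: Phi mu a b]).
Proof.
move=> two_neq0 _ _ mu_skew mu_diag; split.
  move=> a b a_neq0 b_neq0; split; first by rewrite Phi_eq0 // negb_or a_neq0.
    exact: Phi_mu_symmetric.
  exists (2%:R *: a), b; split; first by rewrite scaler_eq0 negb_or two_neq0.
  by split=> //; rewrite tau_Phi // lin_prodZl.
move=> M _ Msym [L1 [L2 [L1_neq0 [L2_neq0 tauM]]]].
exists L1, L2, 2%:R^-1; split => //; first by rewrite invr_eq0.
apply: (tau_mu_symmetric_inj mu_skew two_neq0 Msym).
  exact/mu_symmetricZ/Phi_mu_symmetric.
by rewrite tauM tauZ tau_Phi // scalerA mulVf ?scale1r.
Qed.
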